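(* Let $G$ be a graph, and let $S$ be the set of all vertices $x\in V(G)$ such that $x$ has three pairwise nonadjacent neighbours (i.e. the subgraph induced by the neighbourhood of $x$ has stability number at least $3$). If $S$ is a clique, then $G$ is $T_0$-free.
   Context: Graphs are finite and simple. $T_0$ is the graph with vertices $p,q,u_0,u_1,u_2,u_3,w_1,w_2,w_3$ and edges $pq,pu_0,pu_2,pu_3,qu_1,qu_2,qu_3,u_0w_1,u_1w_1,u_2w_2,u_3w_3,w_1w_2,w_1w_3,w_2w_3$. $G$ is $T_0$-free if no induced subgraph of $G$ is isomorphic to $T_0$. A clique is a (possibly empty) set of pairwise adjacent vertices. *)

From mathcomp Require Import all_boot.
Set Implicit Arguments. Unset Strict Implicit. Unset Printing Implicit Defensive.

Definition simple_graph (T : finType) (e : rel T) : Prop :=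
  symmetric e /\ irreflexive e.

(* T_0 on vertex set 'I_9, numbering
   p=0, q=1, u0=2, u1=3, u2=4, u3=5, w1=6, w2=7, w3=8. *)
Definition T0_edges : seq (nat * nat) :=
  [:: (0,1); (0,2); (0,4); (0,5); (1,3); (1,4); (1,5);
      (2,6); (3,6); (4,7); (5,8); (6,7); (6,8); (7,8)].

Definition T0_adj (i j : 'I_9) : bool :=
  ((nat_of_ord i, nat_of_ord j) \in T0_edges) ||
  ((nat_of_ord j, nat_of_ord i) \in T0_edges).

Definition induced_T0 (T : finType) (e : rel T) : Prop :=
  exists f : 'I_9 -> T, injective f /\ forall i j, e (f i) (f j) = T0_adj i j.

Definition T0_free (T : finType) (e : rel T) : Prop := ~ induced_T0 e.

Definition has_stable3_nbhd (T : finType) (e : rel T) (x : T) : bool :=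
  [exists a : T, exists b : T, exists c : T,
     [&& e x a, e x b, e x c, a != b, a != c, b != c,
         ~~ e a b, ~~ e a c & ~~ e b c]].

Definition S_set (T : finType) (e : rel T) : {set T} :=
  [set x | has_stable3_nbhd e x].

Definition is_clique (T : finType) (e : rel T) (A : {set T}) : Prop :=
  forall x y, x \in A -> y \in A -> x != y -> e x y.

(* In T_0 both p and w_1 have three pairwise nonadjacent neighbours
   (u_0, u_2, u_3 and u_0, u_1, w_2 respectively), yet p and w_1 are not
   adjacent.  An induced copy of T_0 carries these witnesses into G, so the
   images of p and w_1 are two nonadjacent vertices of S. *)

From mathcomp Require Import all_boot.

Set Implicit Arguments.
Unset Strict Implicit.
Unset Printing Implicit Defensive.

Section InducedSubgraph.

Variables (I T : finType) (eI : rel I) (e : rel T) (f : I -> T).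
Hypotheses (f_inj : injective f) (f_induced : forall i j, e (f i) (f j) = eI i j).

Lemma has_stable3_nbhd_induced (x : I) :
  has_stable3_nbhd eI x -> has_stable3_nbhd e (f x).
Proof.
case/existsP=> a /existsP[b /existsP[c abc]].
apply/existsP; exists (f a); apply/existsP; exists (f b); apply/existsP; exists (f c).
by rewrite !f_induced !(inj_eq f_inj).
Qed.

Lemma is_clique_S_set_induced :
  is_clique e (S_set e) -> is_clique eI (S_set eI).
Proof.
move=> cl x y; rewrite !inE => Sx Sy xy.
rewrite -f_induced; apply: cl; rewrite ?inE ?(inj_eq f_inj) //;
  exact: has_stable3_nbhd_induced.
Qed.

End InducedSubgraph.

Lemma T0_S_set_not_clique : ~ is_clique T0_adj (S_set T0_adj).
Proof.
pose v k (lt_k9 : k < 9) : 'I_9 := Ordinal lt_k9.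
have Sp : v 0 isT \in S_set T0_adj.
  rewrite inE; apply/existsP; exists (v 2 isT).
  by apply/existsP; exists (v 4 isT); apply/existsP; exists (v 5 isT).
have Sw1 : v 6 isT \in S_set T0_adj.
  rewrite inE; apply/existsP; exists (v 2 isT).
  by apply/existsP; exists (v 3 isT); apply/existsP; exists (v 7 isT).
by move/(_ _ _ Sp Sw1 isT).
Qed.

Theorem proposition4p11 (T : finType) (e : rel T) :
  simple_graph e -> is_clique e (S_set e) -> T0_free e.
Proof.
move=> _ cl [f [f_inj f_induced]].
exact: T0_S_set_not_clique (is_clique_S_set_induced f_inj f_induced cl).
Qed.
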